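(* Let $a\ge 2$ be an integer. Then there are no integers $n\ge 0$ and $c$ such that $B_{n+a}(t)-B_n(t)=c$ as polynomials in $t$.
   Context: The Stern polynomials $B_n(t)\in\mathbb{Z}[t]$, $n\ge 0$, are defined by $B_0(t)=0$, $B_1(t)=1$, $B_{2n}(t)=tB_n(t)$ and $B_{2n+1}(t)=B_n(t)+B_{n+1}(t)$ for $n\ge 1$. *)

From HB Require Import structures.
From mathcomp Require Import all_boot all_order all_algebra.
Set Implicit Arguments. Unset Strict Implicit. Unset Printing Implicit Defensive.
Import GRing.Theory.
Local Open Scope ring_scope.

(* Fuel-based recursion: with enough fuel (k > n), stern_aux k n = B_n. *)
Fixpoint stern_aux (k n : nat) : {poly int} :=
  match k with
  | 0 => 0
  | k'.+1 =>
    if n == 0%N then 0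
    else if n == 1%N then 1
    else if ~~ odd n then 'X * stern_aux k' n./2
    else stern_aux k' n./2 + stern_aux k' n./2.+1
  end.

Definition stern (n : nat) : {poly int} := stern_aux n.+1 n.

Example stern_check : [/\ stern 0 = 0, stern 1 = 1, stern 2 = 'X * 1,
  stern 3 = 1 + 'X * 1 & stern 5 = 'X * 1 + (1 + 'X * 1)].
Proof. by split. Qed.

(* Evaluating at [t = 2] and [t = 0] linearizes the Stern recurrences:
   [B_n(2) = n] and [B_n(0)] is the parity of [n].  A constant difference
   [B_(n+a) - B_n = c] would then give [c = a >= 2] at [t = 2], while at
   [t = 0] the difference of two parities lies in [{-1, 0, 1}]. *)
From HB Require Import structures.
From mathcomp Require Import all_boot all_order all_algebra zify.
Import GRing.Theory.
Local Open Scope ring_scope.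

Lemma stern_aux_stable (k k' n : nat) :
  (n < k)%N -> (n < k')%N -> stern_aux k n = stern_aux k' n.
Proof.
elim: k k' n => [|k IH] [|k'] n //= ltnk ltnk'.
case: eqP => // n0; case: eqP => // n1.
case: ifP => parity; first by rewrite (IH k') //; lia.
by rewrite (IH k' n./2) ?(IH k' n./2.+1) //; lia.
Qed.

Lemma stern_auxE (k n : nat) : (n < k)%N -> stern_aux k n = stern n.
Proof. by move=> ltnk; apply: stern_aux_stable. Qed.

Lemma stern0 : stern 0 = 0. Proof. by []. Qed.

Lemma stern_aux_double (k n : nat) : (0 < n)%N ->
  stern_aux k.+1 n.*2 = 'X * stern_aux k n.
Proof. by case: n => // n _; rewrite /= odd_double doubleK. Qed.

Lemma stern_aux_doubleS (k n : nat) : (0 < n)%N ->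
  stern_aux k.+1 n.*2.+1 = stern_aux k n + stern_aux k n.+1.
Proof. by case: n => // n _; rewrite /= odd_double uphalf_double. Qed.

Lemma stern_double (n : nat) : stern n.*2 = 'X * stern n.
Proof.
case: n => [|m]; first by rewrite mulr0.
by rewrite {1}/stern stern_aux_double ?stern_auxE //; lia.
Qed.

Lemma stern_doubleS (n : nat) : stern n.*2.+1 = stern n + stern n.+1.
Proof.
case: n => [|m]; first by rewrite stern0 add0r.
by rewrite {1}/stern stern_aux_doubleS ?stern_auxE //; lia.
Qed.

Lemma double_ind (P : nat -> Prop) :
  P 0%N -> P 1%N ->
  (forall n, P n -> P n.*2) ->
  (forall n, P n -> P n.+1 -> P n.*2.+1) ->
  forall n, P n.
Proof.
move=> P0 P1 Pdouble PdoubleS n; elim: n {-2}n (leqnn n) => [|N IH] [|[|n]] //.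
move=> lenN; rewrite -[n.+2](odd_double_half n.+2).
case n_odd: (odd n.+2) => /=; last by apply/Pdouble/IH; lia.
by apply: PdoubleS; apply: IH; lia.
Qed.

Lemma stern_horner2 (n : nat) : (stern n).[2] = n%:R :> int.
Proof.
elim/double_ind: n => [||n IHn|n IHn IHnS]; rewrite ?hornerE //.
  by rewrite stern_double hornerM hornerX IHn -mul2n natrM.
by rewrite stern_doubleS hornerD IHn IHnS -natrD -addnn addnS.
Qed.

Lemma stern_horner0 (n : nat) : (stern n).[0] = (odd n)%:R :> int.
Proof.
elim/double_ind: n => [||n IHn|n IHn IHnS]; rewrite ?hornerE //.
  by rewrite stern_double hornerM hornerX mul0r odd_double.
by rewrite stern_doubleS hornerD IHn IHnS /= odd_double; case: (odd n).
Qed.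

Theorem corollary5p3 (a : nat) : (2 <= a)%N ->
  ~ exists (n : nat) (c : int), stern (n + a) - stern n = c%:P.
Proof.
move=> a_ge2 [n [c diff_const]].
have c_eq : a%:R = c.
  have := congr1 (horner^~ 2) diff_const.
  by rewrite /= hornerD hornerN hornerC !stern_horner2 natrD addrAC subrr add0r.
have := congr1 (horner^~ 0) diff_const.
rewrite /= hornerD hornerN hornerC !stern_horner0 -c_eq oddD.
by case: (odd n); case: (odd a) => /=; lia.
Qed.
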